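(* Let $\Theta,\Theta'$ be a well-formed System $\mathsf{F_\wedge}$ context and let $S_-, S_-', S_+, S_+'$ be types over $\Theta,\Theta'$ with $\Theta,\Theta' \vdash S_-' <: S_-$ and $\Theta,\Theta' \vdash S_+ <: S_+'$. Then for every $\mathsf{F_\wedge}$ type $T$ well-formed over $\Theta, X <: \top$, $$\Theta,\Theta' \vdash T[(S_-,S_+)/X] <: T[(S_-',S_+')/X].$$
   Context: System $\mathsf{F_\wedge}$: raw types $T ::= \top \mid X \mid T \to T \mid \forall X.T \mid T \wedge T$, identified up to $\alpha$-conversion. Contexts are finite sequences of assumptions $X<:T$ or $x:T$ with distinct variables, each type well-formed over the preceding part. Subtyping $\Theta \vdash S <: T$ is generated by: (Var) $\Theta, X<:T,\Theta' \vdash X <: T$; (Top) $T <: \top$; (Refl); (Trans); ($\to$) from $S'<:S$ and $T<:T'$ infer $S\to T <: S' \to T'$; ($\forall$) from $\Theta, X<:\top \vdash S <: T$ infer $\Theta \vdash \forall X.S <: \forall X.T$; (meet) $S\wedge S' <: S$, $S \wedge S' <: S'$, and from $T<:S$, $T<:S'$ infer $T <: S\wedge S'$. Mixed substitution $T[(S_-,S_+)/X]$ (assuming by $\alpha$-conversion that neither $X$ nor free variables of $S_-,S_+$ are bound in $T$) substitutes $S_-$ for negative and $S_+$ for positive occurrences of $X$: $X[(S_-,S_+)/X] = S_+$; $Y[(S_-,S_+)/X] = Y$ for $Y \not\equiv X$; $\top[(S_-,S_+)/X]=\top$; $(T\to T')[(S_-,S_+)/X] = T[(S_+,S_-)/X]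 \to T'[(S_-,S_+)/X]$; $(\forall Y.T)[(S_-,S_+)/X] = \forall Y.T[(S_-,S_+)/X]$; $(T\wedge T')[(S_-,S_+)/X] = T[(S_-,S_+)/X] \wedge T'[(S_-,S_+)/X]$. *)

(* System F-meet with de Bruijn indices (alpha-conversion is
   built in).  Contexts are lists with the MOST RECENT binding at the head;
   a type variable index n refers to the n-th binding of the context
   (counting both type and term bindings, as in TAPL). *)
From Stdlib Require Import List Arith.
Import ListNotations.

Inductive ty : Type :=
  | TTop : ty
  | TVar : nat -> ty
  | TArr : ty -> ty -> ty
  | TAll : ty -> ty
  | TMeet : ty -> ty -> ty.

Inductive binding : Type :=
  | BTy : ty -> binding
  | BTm : ty -> binding.

Definition ctx := list binding.

Fixpoint shift_above (c d : nat) (T : ty) : ty :=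
  match T with
  | TTop => TTop
  | TVar n => if n <? c then TVar n else TVar (n + d)
  | TArr A B => TArr (shift_above c d A) (shift_above c d B)
  | TAll A => TAll (shift_above (S c) d A)
  | TMeet A B => TMeet (shift_above c d A) (shift_above c d B)
  end.

Definition shift (d : nat) (T : ty) : ty := shift_above 0 d T.

Fixpoint wf_ty (G : ctx) (T : ty) : Prop :=
  match T with
  | TTop => True
  | TVar n => exists U, nth_error G n = Some (BTy U)
  | TArr A B => wf_ty G A /\ wf_ty G B
  | TAll A => wf_ty (BTy TTop :: G) A
  | TMeet A B => wf_ty G A /\ wf_ty G B
  end.

Fixpoint wf_ctx (G : ctx) : Prop :=
  match G with
  | [] => True
  | BTy T :: G' => wf_ctx G' /\ wf_ty G' T
  | BTm T :: G' => wf_ctx G' /\ wf_ty G' T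
  end.

Inductive sub : ctx -> ty -> ty -> Prop :=
  | S_Var : forall G n U, nth_error G n = Some (BTy U) ->
      sub G (TVar n) (shift (S n) U)
  | S_Top : forall G T, sub G T TTop
  | S_Refl : forall G T, sub G T T
  | S_Trans : forall G A B C, sub G A B -> sub G B C -> sub G A C
  | S_Arr : forall G S1 S2 T1 T2, sub G S2 S1 -> sub G T1 T2 ->
      sub G (TArr S1 T1) (TArr S2 T2)
  | S_All : forall G S1 T1, sub (BTy TTop :: G) S1 T1 ->
      sub G (TAll S1) (TAll T1)
  | S_MeetL : forall G A B, sub G (TMeet A B) A
  | S_MeetR : forall G A B, sub G (TMeet A B) B
  | S_Meet : forall G T A B, sub G T A -> sub G T B -> sub G T (TMeet A B).

(* Mixed substitution T[(Sm,Sp)/X] where T lives over (Theta, X<:Top)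
   (X = index 0) and Sm, Sp live over (Theta, Theta') with |Theta'| = k.
   The result lives over (Theta, Theta'): variables of Theta are weakened
   past Theta'.  d = number of binders crossed.  Negative occurrences get Sm,
   positive ones get Sp. *)
Fixpoint msubst_aux (k d : nat) (Sm Sp : ty) (T : ty) : ty :=
  match T with
  | TTop => TTop
  | TVar n =>
      if n <? d then TVar n
      else if n =? d then shift d Sp
      else TVar (n - 1 + k)
  | TArr A B => TArr (msubst_aux k d Sp Sm A) (msubst_aux k d Sm Sp B)
  | TAll A => TAll (msubst_aux k (S d) Sm Sp A)
  | TMeet A B => TMeet (msubst_aux k d Sm Sp A) (msubst_aux k d Sm Sp B)
  end.

Definition msubst (k : nat) (Sm Sp T : ty) : ty := msubst_aux k 0 Sm Sp T.

(* Induction on T: at an arrow the two substitutes swap roles, which is exactly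
   what contravariance of S_Arr asks for, and at a quantifier one more [X <: Top]
   binder is crossed.  So the only real work is weakening: a subtyping between
   the substitutes survives when Top-bounded binders are pushed in front of the
   context. *)
From Stdlib Require Import List Arith Lia.
Import ListNotations.

Lemma shift_above_shift_above (U : ty) (c c' d1 d2 : nat) :
  c' <= c -> c <= c' + d2 ->
  shift_above c d1 (shift_above c' d2 U) = shift_above c' (d2 + d1) U.
Proof.
  revert c c'; induction U; intros c c' Hc' Hc; simpl; try reflexivity.
  - destruct (Nat.ltb_spec n c'); simpl.
    + destruct (Nat.ltb_spec n c); [reflexivity | lia].
    + destruct (Nat.ltb_spec (n + d2) c); [lia |]. f_equal; lia.
  - rewrite IHU1, IHU2; auto.
  - rewrite IHU; auto; lia.
  - rewrite IHU1, IHU2; auto.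
Qed.

Lemma sub_weaken_under_tops (m : nat) (G D : ctx) (A B : ty) :
  sub (repeat (BTy TTop) m ++ G) A B ->
  sub (repeat (BTy TTop) m ++ D ++ G)
      (shift_above m (length D) A) (shift_above m (length D) B).
Proof.
  remember (repeat (BTy TTop) m ++ G) as G0 eqn:HG0.
  intros Hsub; revert m HG0; induction Hsub; intros m HG0; subst; simpl.
  - destruct (Nat.ltb_spec n m) as [Hlt | Hge].
    + (* the binding is one of the Top binders, whose shifted bound is Top *)
      rewrite nth_error_app1, nth_error_repeat in H by (rewrite ?repeat_length; lia).
      injection H as <-. apply S_Top.
    + rewrite nth_error_app2, repeat_length in H by (rewrite repeat_length; lia).
      unfold shift; rewrite shift_above_shift_above by lia.
      replace (S n + length D) with (S (n + length D)) by lia.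
      apply S_Var.
      rewrite nth_error_app2, repeat_length, nth_error_app2 by (rewrite ?repeat_length; lia).
      rewrite <- H; f_equal; lia.
  - apply S_Top.
  - apply S_Refl.
  - eapply S_Trans; eauto.
  - apply S_Arr; eauto.
  - apply S_All, (IHHsub (S m)); reflexivity.
  - apply S_MeetL.
  - apply S_MeetR.
  - apply S_Meet; eauto.
Qed.

Lemma sub_weaken_tops (d : nat) (G : ctx) (A B : ty) :
  sub G A B -> sub (repeat (BTy TTop) d ++ G) (shift d A) (shift d B).
Proof.
  intros Hsub.
  pose proof (sub_weaken_under_tops 0 G (repeat (BTy TTop) d) A B Hsub) as Hw.
  rewrite repeat_length in Hw; exact Hw.
Qed.

Lemma sub_meet_mono (G : ctx) (A A' B B' : ty) :
  sub G A A' -> sub G B B' -> sub G (TMeet A B) (TMeet A' B').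
Proof.
  intros HA HB; apply S_Meet.
  - eapply S_Trans; [apply S_MeetL | exact HA].
  - eapply S_Trans; [apply S_MeetR | exact HB].
Qed.

Lemma msubst_aux_sub_mono (G : ctx) (k : nat) (T : ty) :
  forall d Sm Sm' Sp Sp', sub G Sm' Sm -> sub G Sp Sp' ->
  sub (repeat (BTy TTop) d ++ G)
      (msubst_aux k d Sm Sp T) (msubst_aux k d Sm' Sp' T).
Proof.
  induction T; intros d Sm Sm' Sp Sp' Hm Hp; simpl.
  - apply S_Refl.
  - destruct (n <? d); [apply S_Refl |].
    destruct (n =? d); [apply sub_weaken_tops, Hp | apply S_Refl].
  - apply S_Arr; auto.
  - apply S_All, (IHT (S d)); assumption.
  - apply sub_meet_mono; auto.
Qed.

Theorem lemma3p4 (Theta Theta' : ctx) (Sm Sm' Sp Sp' : ty) :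
  wf_ctx (Theta' ++ Theta) ->
  wf_ty (Theta' ++ Theta) Sm -> wf_ty (Theta' ++ Theta) Sm' ->
  wf_ty (Theta' ++ Theta) Sp -> wf_ty (Theta' ++ Theta) Sp' ->
  sub (Theta' ++ Theta) Sm' Sm ->
  sub (Theta' ++ Theta) Sp Sp' ->
  forall T : ty, wf_ty (BTy TTop :: Theta) T ->
    sub (Theta' ++ Theta)
        (msubst (length Theta') Sm Sp T)
        (msubst (length Theta') Sm' Sp' T).
Proof.
  intros _ _ _ _ _ Hm Hp T _.
  exact (msubst_aux_sub_mono _ _ T 0 Sm Sm' Sp Sp' Hm Hp).
Qed.
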